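(* Let $p$ be an odd prime. If $M$ is a discrete $A$-module, then $M$, with the $R$-action obtained by restriction along the inclusion $R\subset A$, is a Bousfield module.
   Context: $\mathbb{Z}_{(p)}$ denotes the $p$-local integers. $A$ is the ring of degree zero stable operations in $p$-local complex $K$-theory. Fix $q$ primitive mod $p^2$, $\Psi^q\in A$ the Adams operation, $q_i=q^{(-1)^i\lfloor i/2\rfloor}$, $\Theta_n(X)=\prod_{i=1}^n(X-q_i)$, $\Phi_n=\Theta_n(\Psi^q)$; every element of $A$ is uniquely a convergent sum $\sum_{n\ge0}a_n\Phi_n$ with $a_n\in\mathbb{Z}_{(p)}$, and $A_m=\{\sum_{n\ge m}a_n\Phi_n\}$. An $A$-module $M$ is discrete if each $x\in M$ satisfies $A_nx=0$ for some $n$. Let $R=\mathbb{Z}_{(p)}[\mathbb{Z}_{(p)}^\times]$, writing $\Psi^j$ for $j\in\mathbb{Z}_{(p)}^\times$; mapping $\Psi^j$ to the Adams operation $\Psi^j\in A$ gives $R\subset A$. A Bousfield module is an $R$-module $M$ such that for each $x\in M$: (a) $Rx$ is finitely generated over $\mathbb{Z}_{(p)}$; (b) for each $j\in\mathbb{Z}_{(p)}^\times$, $\Psi^j$ acts on $Rx\otimes\mathbb{Q}$ by a diagonalisable matrix whose eigenvalues are integer powers of $j$; (c) for each $m\ge1$ the action of $\mathbb{Z}_{(p)}^\times$ on $Rx/p^mRx$ factors through $\mathbb{Z}_{(p)}^\times\to(\mathbb{Z}/p^k\mathbb{Z})^\times$ for sufficiently large $k$. *)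

From HB Require Import structures.
Set Implicit Arguments. Unset Strict Implicit. Unset Printing Implicit Defensive.
From mathcomp Require Import all_boot all_order all_algebra ring.
Import Order.TTheory GRing.Theory Num.Theory.
Local Open Scope ring_scope.
Lemma denq_dvd (x : rat) (d : int) :
  (exists m : int, x * d%:~R = m%:~R) -> (denq x %| d)%Z.
Proof.
move=> [m hm].
have e : numq x * d = m * denq x.
  apply: (@intr_inj rat). rewrite !intrM numqE -hm. by rewrite mulrAC.
have : (denq x %| numq x * d)%Z by rewrite e dvdz_mull.
rewrite Gauss_dvdzr //.
rewrite coprimezE. have := coprime_num_den x. by rewrite coprime_sym.
Qed.
Definition plocal (p : nat) : {pred rat} := fun x => coprime p `|denq x|%N.

Lemma plocal_dvd (p : nat) (x : rat) (d : int) :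
  coprime p `|d|%N -> (exists m : int, x * d%:~R = m%:~R) ->
  x \in plocal p.
Proof.
move=> cd h; have := @denq_dvd x d h.
rewrite /plocal unfold_in /= dvdzE => dv.
exact: coprime_dvdr dv cd.
Qed.

Fact plocal_subring (p : nat) : subring_closed (plocal p).
Proof.
split.
- by rewrite /plocal unfold_in; exact: coprimen1.
- move=> x y hx hy.
  apply: (@plocal_dvd p _ (denq x * denq y)).
    by rewrite abszM coprimeMr; apply/andP; split.
  exists (numq x * denq y - numq y * denq x).
  rewrite intrB !intrM !numqE. ring.
- move=> x y hx hy.
  apply: (@plocal_dvd p _ (denq x * denq y)).
    by rewrite abszM coprimeMr; apply/andP; split.
  exists (numq x * numq y).
  rewrite !intrM !numqE. ring.
Qed.

HB.instance Definition _ (p : nat) :=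
  GRing.isSubringClosed.Build rat (plocal p) (plocal_subring p).

Record Zpl (p : nat) := MkZp { zval : rat; zvalP : zval \in plocal p }.
HB.instance Definition _ (p : nat) := [isSub for @zval p].
HB.instance Definition _ (p : nat) := [Choice of Zpl p by <:].
HB.instance Definition _ (p : nat) := [SubChoice_isSubComNzRing of Zpl p by <:].

Section Defs.
Variable p : nat.
Variable q : int.   (* the fixed q, primitive mod p^2 *)
Local Notation Zpl := (Zpl p).

Definition zunit (j : Zpl) : bool :=
  (zval j != 0) && coprime p `|numq (zval j)|%N.

(* inverse of a unit (junk value 0 on non-units) *)
Definition zinv (j : Zpl) : Zpl := insubd 0 (zval j)^-1.

Definition zpow (j : Zpl) (k : int) : Zpl :=
  match k with
  | Posz n => j ^+ n
  | Negz n => zinv j ^+ n.+1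
  end.

(* exponents e_i with q_i = q ^ e_i, e_i = (-1)^i floor(i/2) *)
Definition qexp (i : nat) : int :=
  if odd i then - (Posz i./2) else Posz i./2.

Definition qnode (i : nat) : Zpl := zpow (q%:~R) (qexp i).

Definition Theta (n : nat) : {poly Zpl} :=
  \prod_(1 <= i < n.+1) ('X - (qnode i)%:P).

(* An element of Aop is given by its coefficient sequence (a_n) in the
   unique expansion  sum_{n>=0} a_n Phi_n,  Phi_n = Theta_n(Psi^q). *)
Definition Aop := nat -> Zpl.

Definition Aadd (a b : Aop) : Aop := fun n => a n + b n.
Definition Ascale (c : Zpl) (a : Aop) : Aop := fun n => c * a n.
Definition Aone : Aop := fun n => if n == 0%N then 1 else 0.

(* Newton coefficients: the k-th coefficient of a polynomial P written in
   the basis Theta_0, Theta_1, ... (nodes starting at q_i). *)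
Fixpoint newton (i : nat) (P : {poly Zpl}) (k : nat) : Zpl :=
  match k with
  | 0%N => P.[qnode i]
  | k'.+1 => newton i.+1
               (Pdiv.Ring.rdivp (P - (P.[qnode i])%:P) ('X - (qnode i)%:P)) k'
  end.

Definition Atrunc (a : Aop) (k : nat) : {poly Zpl} :=
  \sum_(n < k.+1) a n *: Theta n.

(* product in Aop (composition of operations): the coefficient of Phi_k of
   a*b only depends on the truncations at k, since A_{k+1} is an ideal *)
Definition Amul (a b : Aop) : Aop := fun k => newton 1 (Atrunc a k * Atrunc b k) k.

(* action of a in Aop on pi_{2k}(KU_(p)) = Z_(p): Phi_n acts by Theta_n(q^k);
   the sum is finite because Theta_n(q^k) = 0 for n >= 2|k|+1 *)
Definition Aev (k : int) (a : Aop) : Zpl :=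
  \sum_(n < (2 * `|k|).+2) a n * (Theta n).[zpow (q%:~R) k].

(* psi : Z_(p) -> Aop gives the Adams operations Psi^j (j a unit): Psi^j is
   the stable operation acting on pi_{2k} by multiplication by j^k *)
Definition adams_ops (psi : Zpl -> Aop) : Prop :=
  forall j, zunit j -> forall k : int, Aev k (psi j) = zpow j k.

Definition Amodule (M : lmodType Zpl) (act : Aop -> M -> M) : Prop :=
  [/\ (forall a x y, act a (x + y) = act a x + act a y),
      (forall a b x, act (Aadd a b) x = act a x + act b x),
      (forall c a x, act (Ascale c a) x = c *: act a x),
      (forall x, act Aone x = x) &
      (forall a b x, act (Amul a b) x = act a (act b x))].

Definition inAfilt (n : nat) (a : Aop) : Prop := forall m, (m < n)%N -> a m = 0.

Definition discrete_Amodule (M : lmodType Zpl) (act : Aop -> M -> M) : Prop :=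
  Amodule act /\ forall x : M, exists n, forall a, inAfilt n a -> act a x = 0.

Section Bousfield.
Variables (M : lmodType Zpl) (Psi : Zpl -> M -> M).

(* R-module structure: Z_(p)[Z_(p)^x] acting through Psi *)
Definition Rmodule : Prop :=
  [/\ (forall j, zunit j -> forall x y, Psi j (x + y) = Psi j x + Psi j y),
      (forall j, zunit j -> forall c x, Psi j (c *: x) = c *: Psi j x),
      (forall x, Psi 1 x = x) &
      (forall j j', zunit j -> zunit j' -> forall x, Psi (j * j') x = Psi j (Psi j' x))].

Definition inRx (x y : M) : Prop :=
  exists s : seq (Zpl * Zpl), all (fun cj => zunit cj.2) s /\
    y = \sum_(cj <- s) cj.1 *: Psi cj.2 x.

Definition inspan (g : seq M) (y : M) : Prop :=
  exists c : nat -> Zpl, y = \sum_(i < size g) c i *: nth 0 g i.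

(* y maps to 0 in (-) (x) Q *)
Definition torsion (y : M) : Prop := exists m : nat, (0 < m)%N /\ m%:R *: y = 0.

Definition bousfield_a (x : M) : Prop :=
  exists g : seq M, forall y, inRx x y <-> inspan g y.

(* (b) Psi^j acts diagonalisably on Rx (x) Q with eigenvalues integer powers
   of j: Rx (x) Q is spanned by eigenvectors (images of elements e of Rx with
   Psi^j e - j^k e torsion); every y (x) 1 is a Q-combination of them, which
   after clearing denominators reads: n y - sum e_i is torsion. *)
Definition bousfield_b (x : M) : Prop :=
  forall j, zunit j -> forall y, inRx x y ->
    exists n : nat, (0 < n)%N /\
    exists s : seq (M * int),
      (forall e, e \in s -> inRx x e.1 /\ torsion (Psi j e.1 - zpow j e.2 *: e.1))
      /\ torsion (n%:R *: y - \sum_(e <- s) e.1).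

(* (c) for each m >= 1, the action of Z_(p)^x on Rx / p^m Rx factors through
   (Z/p^k)^x for some k *)
Definition bousfield_c (x : M) : Prop :=
  forall m : nat, (1 <= m)%N -> exists k : nat,
    forall j j', zunit j -> zunit j' ->
      (exists c : Zpl, j - j' = (p ^ k)%:R * c) ->
      forall y, inRx x y ->
        exists z, inRx x z /\ Psi j y - Psi j' y = (p ^ m)%:R *: z.

Definition Bousfield_module : Prop :=
  Rmodule /\ forall x : M, [/\ bousfield_a x, bousfield_b x & bousfield_c x].

End Bousfield.

End Defs.

Definition primitive_mod (q : int) (n : nat) : Prop :=
  coprime `|q|%N n /\
  forall m : nat, (0 < m < totient n)%N -> ~ (q ^+ m = 1 %[mod n%:Z])%Z.

(* The operation a = \sum_n a_n Phi_n acts on pi_{2k} KU_(p) by \sum_n a_n Theta_n(q^k).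
   For q^k = q_l only the terms n < l survive, so the values [Aval l a] (l >= 1)
   determine a through a triangular system whose diagonal entries Theta_{l-1}(q_l)
   are nonzero, q being of infinite order.  Evaluation at each node is
   multiplicative (Newton interpolation), so a |-> (Aval l a)_l is an injective ring
   map sending Psi^j to (j^{e_l})_l, where q_l = q^{e_l}.
   If A_n x = 0 then a x only depends on Aval 1 a, ..., Aval n a.  Hence Rx is
   spanned by the (Psi^q)^i x, i <= n; the Lagrange polynomials in Psi^q at
   q_1, ..., q_n produce Psi^j-eigenvectors with eigenvalues j^{e_r} which span Rx
   up to a common denominator; and if j = j' mod p^k then Psi^j - Psi^j' has all
   its values divisible by p^k, so that inverting the triangular system its first
   n coefficients are divisible by p^(k - F) for a constant F depending on n. *)

From HB Require Import structures.
From mathcomp Require Import all_boot all_order all_algebra.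
From mathcomp Require Import ring zify.
From Stdlib Require Import FunctionalExtensionality.
Import Order.TTheory GRing.Theory Num.Theory.
Local Open Scope ring_scope.
Set Implicit Arguments. Unset Strict Implicit. Unset Printing Implicit Defensive.

Section PLocalIntegers.
Variable p : nat.
Local Notation Z := (Zpl p).

Lemma zval_inj : injective (@zval p). Proof. exact: val_inj. Qed.
Lemma zval0 : zval (0 : Z) = 0. Proof. exact: (rmorph0 (val : Z -> rat)). Qed.
Lemma zval1 : zval (1 : Z) = 1. Proof. exact: (rmorph1 (val : Z -> rat)). Qed.
Lemma zvalB (x y : Z) : zval (x - y) = zval x - zval y.
Proof. exact: (rmorphB (val : Z -> rat)). Qed.
Lemma zvalM (x y : Z) : zval (x * y) = zval x * zval y.
Proof. exact: (rmorphM (val : Z -> rat)). Qed.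
Lemma zvalX (x : Z) n : zval (x ^+ n) = zval x ^+ n.
Proof. exact: (rmorphXn (val : Z -> rat)). Qed.
Lemma zval_int (z : int) : zval (z%:~R : Z) = z%:~R.
Proof. exact: (rmorph_int (val : Z -> rat)). Qed.
Lemma zval_nat (n : nat) : zval (n%:R : Z) = n%:R.
Proof. exact: (rmorph_nat (val : Z -> rat)). Qed.
Lemma zval_prod I (r : seq I) (P : pred I) (F : I -> Z) :
  zval (\prod_(i <- r | P i) F i) = \prod_(i <- r | P i) zval (F i).
Proof. exact: (rmorph_prod (val : Z -> rat)). Qed.

Lemma zval_eq0 (x : Z) : (zval x == 0) = (x == 0).
Proof. by rewrite -zval0 (inj_eq zval_inj). Qed.

Lemma zpl_mul_eq0 (x y : Z) : x * y = 0 -> x = 0 \/ y = 0.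
Proof.
move/(congr1 (@zval p)); rewrite zvalM zval0 => /eqP; rewrite mulf_eq0.
by case/orP => /eqP h; [left | right]; apply: zval_inj; rewrite h zval0.
Qed.

Lemma zpl_mulfI (c x y : Z) : c != 0 -> c * x = c * y -> x = y.
Proof.
move=> c0 /(congr1 (@zval p)); rewrite !zvalM => /mulfI e.
by apply: zval_inj; apply: e; rewrite zval_eq0.
Qed.

Lemma plocalV (x : rat) : x != 0 -> coprime p `|numq x|%N -> x^-1 \in plocal p.
Proof.
move=> x0 cp; apply: (@plocal_dvd p _ (numq x)) => //; exists (denq x).
have n0 : (numq x)%:~R != 0 :> rat by rewrite intr_eq0 numq_eq0.
have d0 : (denq x)%:~R != 0 :> rat by rewrite intr_eq0 denq_neq0.
by rewrite -[x in x^-1]divq_num_den invf_div divfK.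
Qed.

Lemma zpl_dvd_numq (c : Z) : exists u : Z, u * c = (`|numq (zval c)|%N)%:R.
Proof.
exists ((Num.sg (numq (zval c))) * denq (zval c))%:~R.
apply: zval_inj; rewrite zvalM zval_int zval_nat.
rewrite -[(`|numq (zval c)|%N)%:R]/((`|numq (zval c)|%N)%:~R : rat).
by rewrite abszE intr_norm normrEsg intrM intr_sg numqE; ring.
Qed.

Lemma zunitE (j : Z) : zunit j = (zval j != 0) && ((zval j)^-1 \in plocal p).
Proof.
rewrite /zunit; have [->|x0] //= := eqVneq (zval j) 0.
rewrite /plocal unfold_in /= -[X in X^-1]divq_num_den invf_div coprimeq_den.
  by rewrite numq_eq0 (negbTE x0); case: (numq (zval j)).
by rewrite coprime_sym; exact: coprime_num_den.
Qed.

Lemma zunit_neq0 (j : Z) : zunit j -> zval j != 0.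
Proof. by case/andP. Qed.

Lemma zunit1 : zunit (1 : Z).
Proof. by rewrite zunitE zval1 oner_eq0 invr1 rpred1. Qed.

Lemma zunitM (j j' : Z) : zunit j -> zunit j' -> zunit (j * j').
Proof.
rewrite !zunitE zvalM invfM => /andP[j0 uj] /andP[j'0 uj'].
by rewrite mulf_neq0 // rpredM.
Qed.

Lemma zunitX (j : Z) n : zunit j -> zunit (j ^+ n).
Proof. by rewrite !zunitE zvalX -exprVn => /andP[j0 uj]; rewrite expf_neq0 // rpredX. Qed.

Lemma zinvE (j : Z) : zunit j -> zval (zinv j) = (zval j)^-1.
Proof. by rewrite zunitE => /andP[_ uj]; rewrite /zinv insubdK. Qed.

Lemma zpowE (j : Z) (k : int) : zunit j -> zval (zpow j k) = zval j ^ k.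
Proof. by move=> uj; case: k => n /=; rewrite zvalX ?zinvE ?exprVn. Qed.

Lemma zpow1 k : zpow (1 : Z) k = 1.
Proof. by apply: zval_inj; rewrite zpowE ?zunit1 // zval1 exp1rz. Qed.

Lemma zpowM (j j' : Z) k :
  zunit j -> zunit j' -> zpow (j * j') k = zpow j k * zpow j' k.
Proof.
by move=> uj uj'; apply: zval_inj; rewrite zvalM !zpowE ?zunitM // zvalM expfzMl.
Qed.

Lemma zpowX (j : Z) (i : nat) k : zunit j -> zpow (j ^+ i) k = zpow j k ^+ i.
Proof.
move=> uj; apply: zval_inj; rewrite zvalX !zpowE ?zunitX // zvalX.
exact: (exprzAC _ (Posz i)).
Qed.

Lemma zpl_common_multiple (cs : seq Z) : all (fun c => c != 0) cs ->
  exists2 N, (0 < N)%N & exists g : Z -> Z, forall c, c \in cs -> g c * c = N%:R.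
Proof.
elim: cs => [|c cs IH] /=; first by exists 1%N => //; exists (fun _ => 0).
case/andP => c0 /IH[N N0 [g hg]]; have [u hu] := zpl_dvd_numq c.
set k := `|numq (zval c)|%N in hu.
have k0 : (0 < k)%N by rewrite absz_gt0 numq_eq0 zval_eq0.
exists (N * k)%N; first by rewrite muln_gt0 N0.
exists (fun c' => if c' == c then N%:R * u else g c' * k%:R) => c'.
rewrite inE; case: eqP => [-> _ | _ /= hc']; first by rewrite -mulrA hu natrM.
by rewrite mulrAC hg // natrM.
Qed.

Hypothesis p_prime : prime p.

Lemma natr_pexp_neq0 e : ((p ^ e)%:R : Z) != 0.
Proof. by rewrite -zval_eq0 zval_nat pnatr_eq0 -lt0n expn_gt0 prime_gt0. Qed.

Lemma zpl_dvd_pexp (c : Z) : c != 0 -> exists e (u : Z), (p ^ e)%:R = c * u.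
Proof.
rewrite -zval_eq0 => c0; have [u hu] := zpl_dvd_numq c.
have n0 : (0 < `|numq (zval c)|)%N by rewrite absz_gt0 numq_eq0.
have [m cpm em] := pfactor_coprime p_prime n0.
set e := logn p _ in em; exists e.
have m0 : (0 < m)%N by move: n0; rewrite em muln_gt0 => /andP[].
have hm : ((m%:R)^-1 : rat) \in plocal p.
  by apply: plocalV; rewrite -[m%:R]/((Posz m)%:~R) ?numq_int // intr_eq0 -lt0n.
exists (insubd 0 ((m%:R)^-1) * u); apply: zval_inj.
rewrite [c * _]mulrC -mulrA hu em natrM zvalM insubdK // !zval_nat zvalM !zval_nat mulKf //.
by rewrite pnatr_eq0 -lt0n.
Qed.

End PLocalIntegers.

Lemma qexp_inj l l' : (0 < l)%N -> (0 < l')%N -> qexp l = qexp l' -> l = l'.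
Proof.
have := odd_double_half l; have := odd_double_half l'; rewrite /qexp -!muln2.
by case: (odd l) (odd l') => [] [] /=; lia.
Qed.

Section Nodes.
Variables (p : nat) (q : int).
Hypotheses (p_prime : prime p) (p_odd : odd p) (q_prim : primitive_mod q (p ^ 2)).
Local Notation Z := (Zpl p).
Local Notation node := (qnode p q).
Local Notation Q := (q%:~R : Z).

Lemma sqrq_neq1 : q ^+ 2 != 1.
Proof.
have p_gt2 : (2 < p)%N by case: p p_prime p_odd => [|[|[|]]].
have tot_gt2 : (2 < totient (p ^ 2))%N.
  rewrite totient_pfactor // expn1 (leq_trans p_gt2) // leq_pmull //.
  by rewrite -ltnS prednK ?prime_gt0 // ltnW.
by case: q_prim => _ hm; apply/eqP => q21; apply: (hm 2%N); rewrite ?q21 ?tot_gt2.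
Qed.

Lemma coprime_p_q : coprime p `|q|.
Proof. by case: q_prim; rewrite coprime_pexpr // coprime_sym. Qed.

Lemma q_neq0 : q != 0.
Proof.
apply: contraTneq coprime_p_q => ->; rewrite /coprime gcdn0.
by rewrite eqn_leq leqNgt prime_gt1.
Qed.

Lemma zunitQ : zunit Q.
Proof. by rewrite /zunit zval_int intr_eq0 q_neq0 numq_int coprime_p_q. Qed.

Lemma qpow_inj (a b : int) : (q%:~R : rat) ^ a = q%:~R ^ b -> a = b.
Proof.
have uq : (q%:~R : rat) \is a GRing.unit by rewrite unitfE intr_eq0 q_neq0.
have q2 : (q%:~R : rat) ^+ 2 != 1.
  apply: contra sqrq_neq1 => /eqP q21; apply/eqP; apply: (@intr_inj rat).
  by rewrite rmorphXn /= q21.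
move=> qab; have : ((q%:~R : rat) ^+ 2) ^ (a - b) == 1.
  by rewrite exprnP exprzAC exprzDr // qab -exprzDr // subrr expr0z exp1rz.
by rewrite pexprz_eq1 ?sqr_ge0 // (negbTE q2) orbF subr_eq0 => /eqP.
Qed.

Lemma zval_qnode l : zval (node l) = (q%:~R : rat) ^ qexp l.
Proof. by rewrite /qnode zpowE ?zunitQ // zval_int. Qed.

Lemma qnode_inj l l' : (0 < l)%N -> (0 < l')%N -> node l = node l' -> l = l'.
Proof.
move=> l0 l'0 /(congr1 (@zval p)); rewrite !zval_qnode => /qpow_inj.
exact: qexp_inj.
Qed.

Lemma Theta_horner n (x : Z) :
  (Theta p q n).[x] = \prod_(1 <= i < n.+1) (x - node i).
Proof. by rewrite horner_prod; apply: eq_bigr => i _; rewrite hornerXsubC. Qed.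

Lemma Theta_root n l : (0 < l)%N -> (l <= n)%N -> (Theta p q n).[node l] = 0.
Proof.
move=> l0 ln; rewrite Theta_horner (big_cat_nat _ (n := l.+1)) //=.
by rewrite big_nat_recr //= subrr mulr0 mul0r.
Qed.

Lemma Theta_node_neq0 n l : (n < l)%N -> (Theta p q n).[node l] != 0.
Proof.
move=> nl; rewrite Theta_horner -zval_eq0 zval_prod prodf_seq_neq0.
apply/allP => i; rewrite mem_index_iota => /andP[i0 il] /=.
have l0 : (0 < l)%N by exact: leq_ltn_trans (leq0n n) nl.
rewrite subr_eq0; apply: contraTneq il => /zval_inj/qnode_inj li.
by rewrite -(li l0 i0) -leqNgt.
Qed.

End Nodes.

Definition pmultiple (p e : nat) : {pred Zpl p} :=
  fun z => zval z / (p ^ e)%:R \in plocal p.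
Arguments pmultiple : clear implicits.

Lemma pmultipleE (p e : nat) (z : Zpl p) :
  (z \in pmultiple p e) = (zval z / (p ^ e)%:R \in plocal p).
Proof. by []. Qed.

Fact pmultiple_zmod_closed (p e : nat) : zmod_closed (pmultiple p e).
Proof.
split=> [|x y]; rewrite !pmultipleE ?zval0 ?mul0r ?rpred0 //.
by rewrite zvalB mulrBl; apply: rpredB.
Qed.

HB.instance Definition _ (p e : nat) :=
  GRing.isZmodClosed.Build (Zpl p) (pmultiple p e) (pmultiple_zmod_closed p e).

Section PAdicDivisibility.
Variable p : nat.
Hypothesis p_prime : prime p.
Local Notation Z := (Zpl p).

Lemma pmultipleP e (z : Z) :
  reflect (exists c, z = (p ^ e)%:R * c) (z \in pmultiple p e).
Proof.
have pe0 := natr_pexp_neq0 p_prime e; rewrite -zval_eq0 zval_nat in pe0.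
apply: (iffP idP) => [ze | [c ->]].
  exists (insubd 0 (zval z / (p ^ e)%:R)); apply: zval_inj.
  by rewrite zvalM insubdK // zval_nat mulrC divfK.
by rewrite pmultipleE zvalM zval_nat [_ * zval c]mulrC mulfK // zvalP.
Qed.

Lemma pmultipleMl e (c z : Z) : z \in pmultiple p e -> c * z \in pmultiple p e.
Proof. by rewrite !pmultipleE zvalM -mulrA; apply: rpredM (zvalP c). Qed.

Lemma pmultipleMr e (c z : Z) : z \in pmultiple p e -> z * c \in pmultiple p e.
Proof. by rewrite mulrC; apply: pmultipleMl. Qed.

Lemma pmultipleW e e' (z : Z) :
  (e' <= e)%N -> z \in pmultiple p e -> z \in pmultiple p e'.
Proof.
move=> e'e /pmultipleP[c ->]; apply/pmultipleP; exists ((p ^ (e - e'))%:R * c).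
by rewrite mulrA -natrM -expnD subnKC.
Qed.

Lemma pmultiple_pexpMl m e (z : Z) :
  (p ^ e)%:R * z \in pmultiple p (m + e) -> z \in pmultiple p m.
Proof.
case/pmultipleP=> c h; apply/pmultipleP; exists c.
apply: (zpl_mulfI (natr_pexp_neq0 p_prime e)).
by rewrite h mulrA -natrM -expnD addnC.
Qed.

Lemma zpow_pmultiple e (j j' : Z) k : zunit j -> zunit j' ->
  j - j' \in pmultiple p e -> zpow j k - zpow j' k \in pmultiple p e.
Proof.
move=> uj uj' jj'; case: k => t /=; rewrite subrXX pmultipleMr //.
have -> : zinv j - zinv j' = (j' - j) * (zinv j * zinv j').
  apply: zval_inj; rewrite zvalB !zvalM zvalB !zinvE //.
  by field; rewrite !zunit_neq0.
by rewrite pmultipleMr // -opprB rpredN.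
Qed.

End PAdicDivisibility.

Section NewtonExpansion.
Variables (p : nat) (q : int).
Local Notation Z := (Zpl p).
Local Notation node := (qnode p q).
Local Notation rdivp := Pdiv.Ring.rdivp.

Definition nodeprod (i n : nat) : {poly Z} := \prod_(i <= l < i + n) ('X - (node l)%:P).

Lemma nodeprod0 i : nodeprod i 0 = 1.
Proof. by rewrite /nodeprod addn0 big_geq. Qed.

Lemma nodeprodS i n : nodeprod i n.+1 = ('X - (node i)%:P) * nodeprod i.+1 n.
Proof. by rewrite /nodeprod big_ltn ?addnS ?addSn // ltnS leq_addr. Qed.

Lemma nodeprodD i m n : nodeprod i (m + n) = nodeprod i m * nodeprod (i + m) n.
Proof. by rewrite /nodeprod addnA (big_cat_nat _ (n := i + m)) // leq_addr. Qed.

Lemma Theta_nodeprod n : Theta p q n = nodeprod 1 n.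
Proof. by rewrite /Theta /nodeprod add1n. Qed.

Lemma nodeprod_root i n : (0 < n)%N -> (nodeprod i n).[node i] = 0.
Proof. by case: n => // n _; rewrite nodeprodS hornerM hornerXsubC subrr mul0r. Qed.

Lemma newton_step i (P : {poly Z}) :
  P = (P.[node i])%:P + rdivp (P - (P.[node i])%:P) ('X - (node i)%:P) * ('X - (node i)%:P).
Proof.
have hdvd : Pdiv.Ring.rdvdp ('X - (node i)%:P) (P - (P.[node i])%:P).
  by apply/Pdiv.Ring.polyXsubCP; rewrite hornerD hornerN hornerC subrr.
by rewrite (Pdiv.RingMonic.rdivpK (monicXsubC _) hdvd) addrC subrK.
Qed.

Lemma newton_expansion K : forall i (P : {poly Z}), exists R,
  P = \sum_(n < K) newton q i P n *: nodeprod i n + nodeprod i K * R.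
Proof.
elim: K => [|K IH] i P; first by exists P; rewrite big_ord0 nodeprod0 add0r mul1r.
pose D := rdivp (P - (P.[node i])%:P) ('X - (node i)%:P).
have [R eD] := IH i.+1 D; exists R.
rewrite big_ord_recl nodeprod0 nodeprodS.
under eq_bigr => n _ do rewrite lift0 nodeprodS scalerAr.
rewrite -mulr_sumr /= -/D {1}[P](newton_step i) -/D {1}eD alg_polyC; ring.
Qed.

Lemma newton_mod k : forall i (P S : {poly Z}),
  newton q i (P + nodeprod i k.+1 * S) k = newton q i P k.
Proof.
have root_eq i n (P S : {poly Z}) :
    (0 < n)%N -> (P + nodeprod i n * S).[node i] = P.[node i].
  by move=> n0; rewrite hornerD hornerM nodeprod_root // mul0r addr0.
elim: k => [|k IH] i P S /=; first exact: root_eq.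
rewrite root_eq //; set c := (P.[node i])%:P.
have -> : P + nodeprod i k.+2 * S - c =
          nodeprod i.+1 k.+1 * S * ('X - (node i)%:P) + (P - c).
  by rewrite nodeprodS; ring.
by rewrite Pdiv.RingMonic.rdivp_addl_mul ?monicXsubC // addrC IH.
Qed.

End NewtonExpansion.

Section NodeValues.
Variables (p : nat) (q : int).
Local Notation Z := (Zpl p).
Local Notation A := (Aop p).
Local Notation node := (qnode p q).
Local Notation Theta := (Theta p q).

(* The scalar by which [a] acts on pi_{2k} when q^k = q_l (see [Aev_qexp]); the
   terms n >= l vanish since Theta_n(q_l) = 0. *)
Definition Aval (l : nat) (a : A) : Z := \sum_(n < l) a n * (Theta n).[node l].

Lemma Aval_widen l N (a : A) : (0 < l)%N -> (l <= N)%N ->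
  \sum_(n < N) a n * (Theta n).[node l] = Aval l a.
Proof.
move=> l0 lN; rewrite /Aval (big_ord_widen N (fun n => a n * (Theta n).[node l]) lN).
rewrite [RHS]big_mkcond; apply: eq_bigr => n _; case: ltnP => // ln.
by rewrite Theta_root ?mulr0.
Qed.

Lemma Aev_qexp l (a : A) : (0 < l)%N -> Aev q (qexp l) a = Aval l a.
Proof.
move=> l0; apply: Aval_widen => //.
have -> : `|qexp l|%N = l./2 by rewrite /qexp; case: odd; rewrite ?abszN.
by rewrite -{1}(odd_double_half l) -muln2; case: odd; lia.
Qed.

Lemma Aval_Atrunc l K (a : A) : (0 < l)%N -> (l <= K.+1)%N ->
  (Atrunc q a K).[node l] = Aval l a.
Proof.
move=> l0 lK; rewrite horner_sum -(Aval_widen a l0 lK).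
by apply: eq_bigr => n _; rewrite hornerZ.
Qed.

Lemma Aval_Aadd l (a b : A) : Aval l (Aadd a b) = Aval l a + Aval l b.
Proof. by rewrite /Aval -big_split; apply: eq_bigr => n _; rewrite mulrDl. Qed.

Lemma Aval_Ascale l c (a : A) : Aval l (Ascale c a) = c * Aval l a.
Proof. by rewrite /Aval mulr_sumr; apply: eq_bigr => n _; rewrite mulrA. Qed.

Lemma Aval_sub l (a b : A) : Aval l (fun n => a n - b n) = Aval l a - Aval l b.
Proof. by rewrite /Aval -sumrB; apply: eq_bigr => n _; rewrite mulrBl. Qed.

Lemma Aval_sum I (s : seq I) (F : I -> A) l :
  Aval l (fun n => \sum_(i <- s) F i n) = \sum_(i <- s) Aval l (F i).
Proof. by rewrite /Aval; under eq_bigr do rewrite mulr_suml; exact: exchange_big. Qed.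

Lemma Aval_Aone l : (0 < l)%N -> Aval l (Aone p) = 1.
Proof.
case: l => // l _; rewrite /Aval big_ord_recl big1 => [|n _]; last by rewrite mul0r.
by rewrite /Theta big_geq // hornerC mulr1 addr0.
Qed.

Lemma Atrunc_mod n K (a : A) : (n <= K)%N ->
  exists S, Atrunc q a K = Atrunc q a n + Theta n.+1 * S.
Proof.
move=> nK; exists (\sum_(n.+1 <= m < K.+1) a m *: nodeprod p q n.+2 (m - n.+1)).
rewrite /Atrunc -!(big_mkord xpredT (fun m => a m *: Theta m)).
rewrite (big_cat_nat _ (n := n.+1)) //= mulr_sumr; congr (_ + _).
apply: eq_big_nat => m /andP[nm _].
by rewrite -scalerAr !Theta_nodeprod -nodeprodD subnKC.
Qed.

Lemma Amul_coef n K (a b : A) : (n <= K)%N ->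
  Amul q a b n = newton q 1 (Atrunc q a K * Atrunc q b K) n.
Proof.
move=> nK; have [Sa ->] := Atrunc_mod a nK; have [Sb ->] := Atrunc_mod b nK.
rewrite /Amul Theta_nodeprod.
set Ta := Atrunc q a n; set Tb := Atrunc q b n; set N := nodeprod p q 1 n.+1.
have -> : (Ta + N * Sa) * (Tb + N * Sb) =
          Ta * Tb + N * (Sa * Tb + Ta * Sb + N * Sa * Sb) by ring.
by rewrite newton_mod.
Qed.

Lemma Aval_Amul l (a b : A) : (0 < l)%N -> Aval l (Amul q a b) = Aval l a * Aval l b.
Proof.
move=> l0; have lK : (l <= l.-1.+1)%N by rewrite prednK.
rewrite -(Aval_Atrunc a l0 lK) -(Aval_Atrunc b l0 lK) -hornerM.
have [R ->] := newton_expansion q l 1 (Atrunc q a l.-1 * Atrunc q b l.-1).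
rewrite hornerD hornerM -Theta_nodeprod Theta_root // mul0r addr0 horner_sum.
apply: eq_bigr => n _; rewrite hornerZ -Theta_nodeprod (Amul_coef (K := l.-1)) //.
by rewrite -ltnS prednK.
Qed.

Hypotheses (p_prime : prime p) (p_odd : odd p) (q_prim : primitive_mod q (p ^ 2)).

Lemma Aval_coef_eq0 n (a : A) :
  (forall l, (0 < l)%N -> (l <= n)%N -> Aval l a = 0) -> forall i, (i < n)%N -> a i = 0.
Proof.
elim: n => [//|n IH] ha.
have lower j : (j < n)%N -> a j = 0 by apply: IH => l l0 ln; apply: ha => //; apply: leqW.
move=> i; rewrite ltnS leq_eqVlt => /orP[/eqP-> | /lower //].
have := ha n.+1 isT (leqnn _); rewrite /Aval big_ord_recr big1 /= => [|j _]; last first.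
  by rewrite lower ?mul0r.
rewrite add0r => /zpl_mul_eq0[] // Theta0.
by have := Theta_node_neq0 p_prime p_odd q_prim (ltnSn n); rewrite Theta0 eqxx.
Qed.

Lemma Aval_inj (a b : A) : (forall l, (0 < l)%N -> Aval l a = Aval l b) -> a = b.
Proof.
move=> hab; apply: functional_extensionality => i; apply/eqP; rewrite -subr_eq0; apply/eqP.
apply: (@Aval_coef_eq0 i.+1 (fun n => a n - b n)) => // l l0 _.
by rewrite Aval_sub hab // subrr.
Qed.

(* F is the total p-adic valuation of the diagonal entries Theta_{l-1}(q_l), l <= n. *)
Lemma Aval_coef_pmultiple n : exists F, forall m (a : A),
  (forall l, (0 < l)%N -> (l <= n)%N -> Aval l a \in pmultiple p (m + F)) ->
  forall i, (i < n)%N -> a i \in pmultiple p m.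
Proof.
elim: n => [|n [F IH]]; first by exists 0%N.
have [E [u hu]] := zpl_dvd_pexp p_prime (Theta_node_neq0 p_prime p_odd q_prim (ltnSn n)).
exists (F + E)%N => m a ha.
have lower j : (j < n)%N -> a j \in pmultiple p (m + E).
  apply: IH => l l0 ln; rewrite -addnA [(E + F)%N]addnC.
  by apply: ha => //; apply: leqW.
move=> i; rewrite ltnS leq_eqVlt => /orP[/eqP-> | /lower hi]; last first.
  by apply: (pmultipleW p_prime _ hi); rewrite leq_addr.
have top : a n * (Theta n).[node n.+1] \in pmultiple p (m + E).
  have := ha n.+1 isT (leqnn _); rewrite /Aval big_ord_recr /= => hs.
  rewrite -(addKr (\sum_(j < n) a j * (Theta j).[node n.+1]) (a n * _)).
  rewrite rpredD ?rpredN ?rpred_sum // => [j _|]; first by rewrite pmultipleMr ?lower.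
  by apply: (pmultipleW p_prime _ hs); rewrite leq_add2l leq_addl.
apply: (@pmultiple_pexpMl p p_prime m E).
by rewrite hu mulrAC [_ * a n]mulrC pmultipleMr.
Qed.

Definition lagrange (n r : nat) : {poly Z} :=
  \prod_(1 <= i < n.+1 | i != r) ('X - (node i)%:P).

Lemma size_lagrange n r : (size (lagrange n r) <= n.+1)%N.
Proof.
rewrite /lagrange -big_filter size_prod_XsubC ltnS size_filter.
by apply: leq_trans (count_size _ _) _; rewrite size_iota subn1.
Qed.

Lemma lagrange_root n r l : (0 < l)%N -> (l <= n)%N -> l != r ->
  (lagrange n r).[node l] = 0.
Proof.
move=> l0 ln lr; rewrite horner_prod -big_filter (bigD1_seq l) /=.
- by rewrite hornerXsubC subrr mul0r.
- by rewrite mem_filter lr mem_index_iota l0 ltnS.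
- by rewrite filter_uniq // iota_uniq.
Qed.

Lemma lagrange_node_neq0 n r : (0 < r)%N -> (lagrange n r).[node r] != 0.
Proof.
move=> r0; rewrite horner_prod -zval_eq0 zval_prod prodf_seq_neq0.
apply/allP => i; rewrite mem_index_iota => /andP[i0 _]; apply/implyP => ir.
rewrite hornerXsubC zval_eq0 subr_eq0; apply: contra ir => /eqP.
by move/(qnode_inj p_prime p_odd q_prim r0 i0)->.
Qed.

End NodeValues.

Section DiscreteModules.
Variables (p : nat) (q : int).
Hypotheses (p_prime : prime p) (p_odd : odd p) (q_prim : primitive_mod q (p ^ 2)).
Local Notation Z := (Zpl p).
Local Notation A := (Aop p).
Local Notation Q := (q%:~R : Z).
Local Notation Aval := (Aval q).
Variable psi : Z -> A.
Hypothesis psi_adams : adams_ops q psi.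
Variables (M : lmodType Z) (act : A -> M -> M).
Hypothesis act_discrete : discrete_Amodule q act.
Local Notation Psi := (fun j => act (psi j)).

Lemma Aval_psi j l : zunit j -> (0 < l)%N -> Aval l (psi j) = zpow j (qexp l).
Proof. by move=> uj l0; rewrite -Aev_qexp ?psi_adams. Qed.

Lemma psi1 : psi 1 = Aone p.
Proof.
by apply: (Aval_inj p_prime p_odd q_prim) => l l0; rewrite Aval_psi ?zunit1 // zpow1 Aval_Aone.
Qed.

Lemma psiM j j' : zunit j -> zunit j' -> psi (j * j') = Amul q (psi j) (psi j').
Proof.
move=> uj uj'; apply: (Aval_inj p_prime p_odd q_prim) => l l0.
by rewrite Aval_Amul // !Aval_psi ?zunitM // zpowM.
Qed.

Let act_Amodule : Amodule q act := act_discrete.1.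

Lemma actD a x y : act a (x + y) = act a x + act a y.
Proof. by case: act_Amodule. Qed.
Lemma act_Aadd a b x : act (Aadd a b) x = act a x + act b x.
Proof. by case: act_Amodule. Qed.
Lemma act_Ascale c a x : act (Ascale c a) x = c *: act a x.
Proof. by case: act_Amodule. Qed.
Lemma act_Aone x : act (Aone p) x = x.
Proof. by case: act_Amodule. Qed.
Lemma act_Amul a b x : act (Amul q a b) x = act a (act b x).
Proof. by case: act_Amodule. Qed.

Lemma actZ a c x : act a (c *: x) = c *: act a x.
Proof.
rewrite -{1}(act_Aone x) -act_Ascale -act_Amul -act_Ascale; congr act.
apply: (Aval_inj p_prime p_odd q_prim) => l l0.
by rewrite Aval_Amul // !Aval_Ascale Aval_Aone // mulr1 mulrC.
Qed.

Lemma act_Azero x : act (fun _ => 0) x = 0.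
Proof.
have A00 : Aadd (fun _ => 0 : Z) (fun _ => 0) = (fun _ => 0).
  by apply: functional_extensionality => i; rewrite /Aadd addr0.
have := act_Aadd (fun _ => 0) (fun _ => 0) x; rewrite A00 => /eqP.
by rewrite -subr_eq subrr eq_sym => /eqP.
Qed.

Lemma act_sum I (s : seq I) (F : I -> A) x :
  act (fun n => \sum_(i <- s) F i n) x = \sum_(i <- s) act (F i) x.
Proof.
elim: s => [|i s IH]; last rewrite big_cons -IH -act_Aadd.
  rewrite big_nil -(act_Azero x); congr act.
  by apply: functional_extensionality => n; rewrite big_nil.
by congr act; apply: functional_extensionality => n; rewrite big_cons.
Qed.

Definition Acomb (s : seq (Z * Z)) : A := fun n => \sum_(cj <- s) cj.1 * psi cj.2 n.

Lemma act_Acomb s x : act (Acomb s) x = \sum_(cj <- s) cj.1 *: Psi cj.2 x.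
Proof. by rewrite act_sum; apply: eq_bigr => cj _; rewrite -act_Ascale. Qed.

Lemma Aval_Acomb s l : Aval l (Acomb s) = \sum_(cj <- s) cj.1 * Aval l (psi cj.2).
Proof. by rewrite Aval_sum; apply: eq_bigr => cj _; rewrite -Aval_Ascale. Qed.

Lemma inRxP x y : inRx Psi x y <->
  exists s, all (fun cj => zunit cj.2) s /\ y = act (Acomb s) x.
Proof. by split; case=> s [us ->]; exists s; rewrite act_Acomb. Qed.

Definition Qpows (c : nat -> Z) (N : nat) : seq (Z * Z) :=
  [seq (c i, Q ^+ i) | i <- index_iota 0 N].

Lemma Qpows_zunit c N : all (fun cj => zunit cj.2) (Qpows c N).
Proof. by apply/allP => cj /mapP[i _ ->]; apply: zunitX; apply: zunitQ. Qed.

Lemma act_Qpows c N x :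
  act (Acomb (Qpows c N)) x = \sum_(i < N) c i *: Psi (Q ^+ i) x.
Proof. by rewrite act_Acomb big_map big_mkord. Qed.

Definition Apoly (B : {poly Z}) (N : nat) : A := Acomb (Qpows (fun i => B`_i) N).

Lemma Aval_Apoly (B : {poly Z}) N l : (0 < l)%N -> (size B <= N)%N ->
  Aval l (Apoly B N) = B.[qnode p q l].
Proof.
move=> l0 sB; rewrite Aval_Acomb big_map big_mkord.
rewrite (horner_coef_wide _ sB); apply: eq_bigr => i _ /=.
by rewrite Aval_psi ?zunitX ?zunitQ // zpowX ?zunitQ.
Qed.

Lemma size_Atrunc (a : A) K : (size (Atrunc q a K) <= K.+1)%N.
Proof.
apply: leq_trans (size_sum _ _ _) _; apply/bigmax_leqP => i _.
apply: leq_trans (size_scale_leq _ _) _.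
by rewrite /Theta size_prod_XsubC /index_iota size_iota subn1 ltn_ord.
Qed.

Lemma Psi_Rmodule : Rmodule Psi.
Proof.
split=> [j _ x y | j _ c x | x | j j' uj uj' x].
- exact: actD.
- exact: actZ.
- by rewrite psi1 act_Aone.
- by rewrite psiM // act_Amul.
Qed.

Section AnnihilatedElement.
Variables (x : M) (n : nat).
Hypothesis x_ann : forall a, inAfilt n a -> act a x = 0.

Lemma act_eq_Aval a b :
  (forall l, (0 < l)%N -> (l <= n)%N -> Aval l a = Aval l b) -> act a x = act b x.
Proof.
move=> hab; have -> : a = Aadd b (fun i => a i - b i).
  by apply: functional_extensionality => i; rewrite /Aadd addrC subrK.
rewrite act_Aadd (x_ann (a := fun i => a i - b i)) ?addr0 // => i.
apply: (Aval_coef_eq0 p_prime p_odd q_prim (a := fun i => a i - b i)) => l l0 ln.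
by rewrite Aval_sub hab // subrr.
Qed.

Lemma act_Atrunc b : act b x = act (Apoly (Atrunc q b n) n.+1) x.
Proof.
apply: act_eq_Aval => l l0 ln.
by rewrite Aval_Apoly ?size_Atrunc // Aval_Atrunc // leqW.
Qed.

Lemma inRx_act b : inRx Psi x (act b x).
Proof.
apply/inRxP; exists (Qpows (fun i => (Atrunc q b n)`_i) n.+1).
by split; [exact: Qpows_zunit | exact: act_Atrunc].
Qed.

Lemma Rx_finitely_generated : bousfield_a Psi x.
Proof.
set g := [seq Psi (Q ^+ i) x | i <- index_iota 0 n.+1].
have span (c : nat -> Z) :
    \sum_(i < size g) c i *: nth 0 g i = \sum_(i < n.+1) c i *: Psi (Q ^+ i) x.
  rewrite size_map size_iota subn0; apply: eq_bigr => i _.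
  by rewrite (nth_map 0%N) ?size_iota // nth_iota.
exists g => y; split.
- case/inRxP => s [_ ->]; exists (fun i => (Atrunc q (Acomb s) n)`_i).
  by rewrite span act_Atrunc act_Qpows.
- case=> c ->; apply/inRxP; exists (Qpows c n.+1).
  by split; [exact: Qpows_zunit | rewrite span act_Qpows].
Qed.

Lemma lagrange_eigenvector j r c : zunit j -> (0 < r)%N ->
  let e := act (Ascale c (Apoly (lagrange p q n r) n.+1)) x in
  Psi j e = zpow j (qexp r) *: e.
Proof.
move=> uj r0 /=; rewrite -act_Amul -act_Ascale; apply: act_eq_Aval => l l0 ln.
rewrite Aval_Amul // Aval_psi // !Aval_Ascale Aval_Apoly ?size_lagrange //.
by have [->|lr] := eqVneq l r; last rewrite lagrange_root ?mulr0.
Qed.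

Lemma Rx_eigen_decomposition : bousfield_b Psi x.
Proof.
move=> j uj y /inRxP[s [_ ->]]; set b := Acomb s.
pose L r := (lagrange p q n r).[qnode p q r].
have [N N0 [g hg]] : exists2 N, (0 < N)%N &
    exists g : Z -> Z, forall c, c \in [seq L r | r <- index_iota 1 n.+1] -> g c * c = N%:R.
  apply: zpl_common_multiple; apply/allP => _ /mapP[r + ->].
  by rewrite mem_index_iota => /andP[r0 _]; apply: lagrange_node_neq0.
have gL r : (0 < r)%N -> (r <= n)%N -> g (L r) * L r = N%:R.
  by move=> r0 rn; apply/hg/map_f; rewrite mem_index_iota r0.
pose e r := act (Ascale (Aval r b * g (L r)) (Apoly (lagrange p q n r) n.+1)) x.
have Aval_e r l : (0 < l)%N ->
    Aval l (Ascale (Aval r b * g (L r)) (Apoly (lagrange p q n r) n.+1)) =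
    Aval r b * g (L r) * (lagrange p q n r).[qnode p q l].
  by move=> l0; rewrite Aval_Ascale Aval_Apoly ?size_lagrange.
(* N (b x) = \sum_r e r is Lagrange interpolation of the values of b at q_1, ..., q_n,
   with the denominators L r cleared. *)
exists N; split => //; exists [seq (e r, qexp r) | r <- index_iota 1 n.+1]; split.
- move=> _ /mapP[r + ->]; rewrite mem_index_iota => /andP[r0 _] /=.
  split; first exact: inRx_act.
  by exists 1%N; rewrite scale1r lagrange_eigenvector // subrr.
- exists 1%N; split => //; rewrite scale1r big_map -act_sum -act_Ascale.
  apply/eqP; rewrite subr_eq0; apply/eqP/act_eq_Aval => l l0 ln; rewrite Aval_Ascale Aval_sum.
  rewrite (bigD1_seq l) ?iota_uniq ?mem_index_iota ?l0 //= Aval_e // -mulrA gL //.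
  rewrite big1_seq ?addr0 1?mulrC // => r /andP[rl]; rewrite mem_index_iota.
  by case/andP=> r0 rn; rewrite Aval_e // lagrange_root // 1?eq_sym // mulr0.
Qed.

Lemma Rx_congruence : bousfield_c Psi x.
Proof.
move=> m _; have [F hF] := Aval_coef_pmultiple p_prime p_odd q_prim n.
exists (m + F)%N => j j' uj uj' [c0 jj'] y /inRxP[s [_ ->]]; set b := Acomb s.
pose d i := psi j i - psi j' i.
have d_pm i : (i < n)%N -> d i \in pmultiple p m.
  apply: hF => l l0 ln; rewrite Aval_sub !Aval_psi //.
  by apply: zpow_pmultiple => //; apply/(pmultipleP p_prime); exists c0.
pose z i := insubd (0 : Z) (zval (d i) / (p ^ m)%:R).
have dz i : (i < n)%N -> (p ^ m)%:R * z i = d i.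
  move=> iN; apply: zval_inj; rewrite zvalM zval_nat insubdK; last exact: d_pm.
  have := natr_pexp_neq0 p_prime m; rewrite -zval_eq0 zval_nat => pm0.
  by rewrite mulrC divfK.
exists (act (Amul q z b) x); split; first exact: inRx_act.
rewrite -!act_Amul -act_Ascale.
suff -> : act (Amul q (psi j) b) x =
          act (Aadd (Amul q (psi j') b) (Ascale (p ^ m)%:R (Amul q z b))) x.
  by rewrite act_Aadd addrC addKr.
apply: act_eq_Aval => l l0 ln.
rewrite Aval_Aadd Aval_Ascale !Aval_Amul // mulrA -mulrDl; congr (_ * _).
have -> : (p ^ m)%:R * Aval l z = Aval l (psi j) - Aval l (psi j').
  rewrite -Aval_sub /Aval mulr_sumr; apply: eq_bigr => i _.
  by rewrite mulrA dz // (leq_trans (ltn_ord i)).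
by rewrite addrC subrK.
Qed.

End AnnihilatedElement.

End DiscreteModules.

Theorem theorem4p2 (p : nat) (q : int) (psi : Zpl p -> Aop p)
    (M : lmodType (Zpl p)) (act : Aop p -> M -> M) :
  prime p -> odd p -> primitive_mod q (p ^ 2) ->
  adams_ops q psi ->
  discrete_Amodule q act ->
  Bousfield_module (fun j : Zpl p => act (psi j)).
Proof.
move=> p_prime p_odd q_prim psi_adams act_discrete.
split; first exact: (Psi_Rmodule p_prime p_odd q_prim psi_adams act_discrete).
move=> x; have [n x_ann] := act_discrete.2 x; split.
- exact: (Rx_finitely_generated p_prime p_odd q_prim psi_adams act_discrete x_ann).
- exact: (Rx_eigen_decomposition p_prime p_odd q_prim psi_adams act_discrete x_ann).
- exact: (Rx_congruence p_prime p_odd q_prim psi_adams act_discrete x_ann).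
Qed.
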